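(* Let $G$ be a graph with a vertex $r$ that belongs to no minimum vertex cover of $G$ (so $\mathrm{OPT}(G-r)=\mathrm{OPT}(G)$), and let $Y$ be a minimal blocking set of $G$ with $r\notin Y$. Then there exists a (possibly empty) set $Z\subseteq N(r)$ such that $Y\cup Z$ is a minimal blocking set of $G-r$.
   Context: $\mathrm{OPT}(G)$ is the minimum vertex cover size; minimum vertex covers have size $\mathrm{OPT}(G)$. $Y\subseteq V(G)$ is a blocking set if no minimum vertex cover contains $Y$; minimal if no proper subset is. $N(r)$ is the set of neighbors of $r$. *)

(* A finite simple graph is a symmetric irreflexive relation
   e : rel T on a finType T. Induced subgraphs are represented by a vertex set
   V : {set T}; G itself is V = [set: T], and G - r is V = [set~ r]. *)
From mathcomp Require Import all_boot.
Set Implicit Arguments. Unset Strict Implicit. Unset Printing Implicit Defensive.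

Section Graphs.
Variable T : finType.
Variable e : rel T.

Definition is_vc (V C : {set T}) : Prop :=
  C \subset V /\
  forall u v, u \in V -> v \in V -> e u v -> (u \in C) \/ (v \in C).

Definition is_min_vc (V C : {set T}) : Prop :=
  is_vc V C /\ forall C' : {set T}, is_vc V C' -> #|C| <= #|C'|.

Definition blocking (V Y : {set T}) : Prop :=
  Y \subset V /\ forall C : {set T}, is_min_vc V C -> ~ (Y \subset C).

Definition minimal_blocking (V Y : {set T}) : Prop :=
  blocking V Y /\ forall Y' : {set T}, Y' \proper Y -> ~ blocking V Y'.

Definition nbhd (r : T) : {set T} := [set u | e r u].

End Graphs.

(* Write G' = G - r.  Since r lies in no minimum vertex cover of G, every
   minimum cover C of G contains N(r), and removing r from G does not lower the
   optimum; hence the minimum vertex covers of G are exactly the minimum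
   vertex covers of G' that contain N(r) ([min_vc_del_iff]).
   Consequently:
   - Y :|: N(r) is a blocking set of G' ([blocking_del_nbhd]), since a minimum
     cover of G' containing it would be a minimum cover of G containing Y;
   - every blocking set W of G' inside Y :|: N(r) contains Y
     ([blocking_del_supset]): otherwise Y :&: W is a proper, hence
     non-blocking, subset of Y, so it lies in some minimum cover C of G, and C
     is a minimum cover of G' containing N(r), hence containing W.
   Shrinking Y :|: N(r) to an inclusion-minimal blocking set W of G'
   ([minimal_subset_exists]) then gives W = Y :|: (W :&: N(r)), which is the
   required set with Z := W :&: N(r). *)
From mathcomp Require Import all_boot.
From Stdlib Require Import Classical.

Set Implicit Arguments.
Unset Strict Implicit.
Unset Printing Implicit Defensive.

Lemma minimal_subset_exists (T : finType) (P : {set T} -> Prop) (A : {set T}) :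
  P A -> exists2 B : {set T}, B \subset A &
    P B /\ forall B' : {set T}, B' \proper B -> ~ P B'.
Proof.
have [n] := ubnP #|A|; elim: n A => // n IH A ltAn PA.
have [[B' ltB'A PB'] | no_smaller] :=
  classic (exists2 B' : {set T}, B' \proper A & P B').
- have ltB'n : #|B'| < n by apply: leq_trans (proper_card ltB'A) _.
  have [B subBB' minB] := IH B' ltB'n PB'.
  by exists B => //; apply: subset_trans subBB' (proper_sub ltB'A).
- exists A => //; split=> // B' ltB'A PB'; apply: no_smaller; by exists B'.
Qed.

Lemma not_blocking_cover (T : finType) (e : rel T) (V X : {set T}) :
  X \subset V -> ~ blocking e V X ->
  exists C : {set T}, is_min_vc e V C /\ X \subset C.
Proof.
move=> subXV nbX; apply: NNPP => no_cover; apply: nbX; split=> // C minC subXC.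
by apply: no_cover; exists C.
Qed.

Section DeleteVertex.
Variables (T : finType) (e : rel T).
Hypotheses (e_sym : symmetric e) (e_irr : irreflexive e).
Variable r : T.

Lemma vc_restrict (C : {set T}) :
  is_vc e [set: T] C -> r \notin C -> is_vc e [set~ r] C.
Proof.
move=> [_ coverC] rNC; split=> [|u v _ _ /coverC]; last exact.
by apply/subsetP => x xC; rewrite in_setC1; apply: contraNneq rNC => <-.
Qed.

Lemma vc_del (D : {set T}) :
  is_vc e [set: T] D -> is_vc e [set~ r] (D :\ r).
Proof.
move=> [_ coverD]; split; first by apply/subsetP => x /setD1P[/eqP xr _];
  rewrite in_setC1; apply/eqP.
move=> u v; rewrite !in_setC1 => ur vr /coverD[||uD|vD] //.
  by left; apply/setD1P.
by right; apply/setD1P.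
Qed.

Lemma vc_add (C : {set T}) :
  is_vc e [set~ r] C -> is_vc e [set: T] (r |: C).
Proof.
move=> [_ coverC]; split=> [|u v _ _ euv]; first exact: subsetT.
have [-> | ur] := eqVneq u r; first by left; rewrite setU11.
have [-> | vr] := eqVneq v r; first by right; rewrite setU11.
by case: (coverC u v) => //; rewrite ?in_setC1 // => h;
  [left | right]; rewrite in_setU1 h orbT.
Qed.

Lemma vc_extend (C : {set T}) :
  is_vc e [set~ r] C -> nbhd e r \subset C -> is_vc e [set: T] C.
Proof.
move=> [_ coverC] subNC; split=> [|u v _ _ euv]; first exact: subsetT.
have inN x : e r x -> x \in C by move=> erx; apply: (subsetP subNC); rewrite inE.
have [ur | ur] := eqVneq u r; first by right; apply: inN; rewrite -ur.
have [vr | vr] := eqVneq v r; first by left; apply: inN; rewrite -vr e_sym.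
by apply: coverC; rewrite ?in_setC1.
Qed.

Hypothesis hr : forall C : {set T}, is_min_vc e [set: T] C -> r \notin C.

Lemma min_vc_del_iff (C : {set T}) :
  is_min_vc e [set: T] C <-> is_min_vc e [set~ r] C /\ nbhd e r \subset C.
Proof.
split=> [minC | [[vcC minC] subNC]].
- have rNC := hr minC; have [[_ coverC] optC] := minC.
  have subNC : nbhd e r \subset C.
    apply/subsetP => x; rewrite inE => erx.
    by case: (coverC r x) => //; rewrite (negPf rNC).
  split=> //; split; first exact: vc_restrict.
  (* a smaller cover C' of G - r would make r |: C' a minimum cover of G *)
  move=> C' vcC'; rewrite leqNgt; apply/negP => ltC'C.
  have min_rC' : is_min_vc e [set: T] (r |: C').
    split=> [|D vcD]; first exact: vc_add.
    apply: leq_trans (optC D vcD); rewrite cardsU1.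
    by apply: leq_trans ltC'C; case: (r \notin C').
  by move: (hr min_rC'); rewrite setU11.
- split=> [|D vcD]; first exact: vc_extend.
  apply: leq_trans (minC _ (vc_del vcD)) _.
  exact: subset_leq_card (subsetDl _ _).
Qed.

Variable Y : {set T}.
Hypotheses (hY : minimal_blocking e [set: T] Y) (hrY : r \notin Y).

Lemma blocking_del_nbhd : blocking e [set~ r] (Y :|: nbhd e r).
Proof.
split.
  apply/subsetP => x /setUP[xY | ]; rewrite in_setC1.
    by apply: contraNneq hrY => <-.
  by rewrite inE; apply: contraTneq => ->; rewrite e_irr.
move=> C minC; rewrite subUset => /andP[subYC subNC].
have minGC : is_min_vc e [set: T] C by apply/min_vc_del_iff.
exact: hY.1.2 C minGC subYC.
Qed.

Lemma blocking_del_supset (W : {set T}) :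
  W \subset Y :|: nbhd e r -> blocking e [set~ r] W -> Y \subset W.
Proof.
move=> subW [_ blockW]; apply: NNPP => YNW.
have ltYW : Y :&: W \proper Y.
  by rewrite properEneq subsetIl andbT; apply: contra_notN YNW => /eqP <-;
    exact: subsetIr.
have [C [minC subC]] := not_blocking_cover (subsetT (Y :&: W)) (hY.2 _ ltYW).
have [minC' subNC] := (min_vc_del_iff C).1 minC.
apply: blockW minC' _; apply/subsetP => x xW.
have /setUP[xY | xN] := subsetP subW x xW; last exact: (subsetP subNC).
by apply: (subsetP subC); rewrite inE xY.
Qed.

End DeleteVertex.

Theorem mainTheorem18 (T : finType) (e : rel T)
  (e_sym : symmetric e) (e_irr : irreflexive e)
  (r : T) (Y : {set T})
  (hr : forall C : {set T}, is_min_vc e [set: T] C -> r \notin C)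
  (hY : minimal_blocking e [set: T] Y)
  (hrY : r \notin Y) :
  exists Z : {set T}, Z \subset nbhd e r /\
    minimal_blocking e [set~ r] (Y :|: Z).
Proof.
have [W subW [blockW minW]] :=
  minimal_subset_exists (blocking_del_nbhd e_sym e_irr hr hY hrY).
have subYW := blocking_del_supset e_sym hr hY subW blockW.
exists (W :&: nbhd e r); split; first exact: subsetIr.
(* W = Y :|: (W :&: N(r)) because Y \subset W \subset Y :|: N(r) *)
have -> : Y :|: (W :&: nbhd e r) = W.
  by rewrite setUIr (setUidPr subYW); apply/setIidPl.
by split.
Qed.
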